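(* Let $K\subseteq\mathbb{R}^n$ be a bounded star-shaped set with diameter $d$, and let $\sigma>0$. For any $\varepsilon\in(0,1/2)$, $$\mathfrak{M}\gtrsim \varepsilon\sigma^2\wedge d^2,$$ i.e. $\mathfrak{M}\ge a\,(\varepsilon\sigma^2\wedge d^2)$ for some absolute constant $a>0$.
   Context: Model: the unknown mean $\mu$ lies in $K$. The uncorrupted sample is $\tilde X_i=\mu+\xi_i$, $i=1,\dots,N$, with $\xi_i$ i.i.d. copies of $\xi$ whose distribution belongs to $\Xi_{\sigma^2}$, the family of all distributions on $\mathbb{R}^n$ with mean zero and covariance $\Sigma\preceq\sigma^2 I$. An adversary $\mathcal{C}$, which may inspect the whole uncorrupted sample and knows the model and estimator, replaces at most $\varepsilon N$ of the points by arbitrary points; one observes $X=\mathcal{C}(\tilde X)$. The minimax risk is $$\mathfrak{M}=\inf_{\hat\mu}\sup_{\mu\in K}\sup_{\xi\in\Xi_{\sigma^2}}\sup_{\mathcal{C}}\mathbb{E}_\mu\|\hat\mu(\mathcal{C}(\tilde X))-\mu\|^2.$$ Star-shaped: there is $k^*\in K$ with $(1-t)k^*+tk\in K$ for all $k\in K$, $t\in[0,1]$. Diameter $d=\sup_{x,y\in K}\|x-y\|$; $a\wedge b=\min(a,b)$. *)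

From HB Require Import structures.
From mathcomp Require Import all_boot all_order all_algebra.
From mathcomp Require Import all_classical all_reals all_analysis.
Set Implicit Arguments. Unset Strict Implicit. Unset Printing Implicit Defensive.
Import Order.TTheory GRing.Theory Num.Theory.
Local Open Scope classical_set_scope.
Local Open Scope ring_scope.

(* R^n is represented by n.-tuple R, which MathComp-Analysis equips with the
   product (= Borel) sigma-algebra of the coordinates. *)
Section Defs.
Variable R : realType.

Definition vadd (n : nat) (x y : n.-tuple R) : n.-tuple R :=
  [tuple tnth x j + tnth y j | j < n].
Definition vsub (n : nat) (x y : n.-tuple R) : n.-tuple R :=
  [tuple tnth x j - tnth y j | j < n].
Definition sqnorm (n : nat) (x : n.-tuple R) : R := \sum_(j < n) tnth x j ^+ 2.
Definition enorm (n : nat) (x : n.-tuple R) : R := Num.sqrt (sqnorm x).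
Definition rowv (n : nat) (x : n.-tuple R) : 'rV[R]_n := \row_j tnth x j.

Definition bounded_tset (n : nat) (K : set (n.-tuple R)) : Prop :=
  exists M : R, forall x, K x -> enorm x <= M.

Definition star_shaped_tset (n : nat) (K : set (n.-tuple R)) : Prop :=
  exists kstar, K kstar /\
    forall k t, K k -> 0 <= t <= 1 ->
      K (vadd [tuple (1 - t) * tnth kstar j | j < n] [tuple t * tnth k j | j < n]).

Definition tdiam (n : nat) (K : set (n.-tuple R)) : R :=
  sup [set r | exists x y, K x /\ K y /\ r = enorm (vsub x y)].

Definition mean_vec (n : nat) (Q : probability (n.-tuple R) R) : 'rV[R]_n :=
  \row_j fine (\int[Q]_x (tnth x j)%:E).
Definition cov_mx (n : nat) (Q : probability (n.-tuple R) R) : 'M[R]_n :=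
  \matrix_(j, k) fine (\int[Q]_x
     ((tnth x j - mean_vec Q 0 j) * (tnth x k - mean_vec Q 0 k))%:E).

Definition Xi_class (n : nat) (s2 : R) (Q : probability (n.-tuple R) R) : Prop :=
  (forall j : 'I_n, Q.-integrable setT (fun x => (tnth x j)%:E)) /\
  (forall j : 'I_n, Q.-integrable setT (fun x => (tnth x j ^+ 2)%:E)) /\
  mean_vec Q = 0 /\
  (forall u : 'rV[R]_n,
     (u *m cov_mx Q *m u^T) 0 0 <= (u *m (s2%:M) *m u^T) 0 0).

Definition adversary (n N : nat) (eps : R)
  (C : N.-tuple (n.-tuple R) -> N.-tuple (n.-tuple R)) : Prop :=
  forall x, (#|[set i : 'I_N | tnth (C x) i != tnth x i]|)%:R <= eps * N%:R.

(* the risks E_mu ||muhat(C(Xtilde)) - mu||^2 obtainable against estimator muhat: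
   mu in K, xi with law in Xi_{sigma^2}, Xtilde_i = mu + xi_i with xi_1..xi_N
   i.i.d. copies of xi (realised on some probability space), C an adversary *)
Definition attainable_risks (n N : nat) (K : set (n.-tuple R)) (s2 eps : R)
  (muhat : N.-tuple (n.-tuple R) -> n.-tuple R) : set (\bar R) :=
  [set r | exists mu, K mu /\
     exists (d : measure_display) (Omega : measurableType d)
            (P : probability Omega R) (xi : 'I_N -> Omega -> n.-tuple R)
            (Q : probability (n.-tuple R) R),
       Xi_class s2 Q /\
       (forall i, measurable_fun setT (xi i)) /\
       (forall i B, measurable B -> P (xi i @^-1` B) = Q B) /\
       (forall B : 'I_N -> set (n.-tuple R), (forall i, measurable (B i)) ->
          P (\bigcap_(i in [set: 'I_N]) (xi i @^-1` B i)) =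
          (\big[*%E/1%E]_(i < N) P (xi i @^-1` B i))%E) /\
       exists C, adversary eps C /\
         r = (\int[P]_w
               (sqnorm (vsub (muhat (C [tuple vadd mu (xi i w) | i < N])) mu))%:E)%E].

Definition worst_risk (n N : nat) (K : set (n.-tuple R)) (s2 eps : R)
  (muhat : N.-tuple (n.-tuple R) -> n.-tuple R) : \bar R :=
  ereal_sup (attainable_risks K s2 eps muhat).

Definition minimax_risk (n N : nat) (K : set (n.-tuple R)) (s2 eps : R) : \bar R :=
  ereal_inf [set worst_risk K s2 eps muhat |
               muhat in [set f : N.-tuple (n.-tuple R) -> n.-tuple R |
                          measurable_fun setT f]].

End Defs.

(* Two-point argument against an adversary that hides the difference.  Put
   q = eps/2 and let mu0, mu in K with |mu - mu0|^2 <= q sigma^2.  The noise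
   equal to mu0 - mu with probability 1 - q and to (1 - 1/q)(mu0 - mu) with
   probability q is centred, with covariance ((1-q)/q)(mu0-mu)(mu0-mu)^T
   <= sigma^2 I; the clean sample mu + xi_i equals mu0 except at the points
   where the second value was drawn.  By Markov's inequality there are at most
   eps N such points with probability >= 1/2, and the adversary then overwrites
   them with mu0, so that any estimator sees the constant sample (mu0, ..., mu0)
   and pays at least |muhat(mu0, ..., mu0) - mu|^2 / 2.  Comparing mu = mu0 with
   mu = mu1 gives risk >= |mu1 - mu0|^2 / 8.  Finally K contains a point k with
   |k - mu0| >= d/4, where mu0 is a star centre, and the segment [mu0, k] contains
   mu1 with |mu1 - mu0|^2 = min(q sigma^2, |k - mu0|^2). *)

From HB Require Import structures.
From mathcomp Require Import all_boot all_order all_algebra.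
From mathcomp Require Import all_classical all_reals all_analysis.
From mathcomp Require Import measurable_realfun ring lra.
Import Order.TTheory GRing.Theory Num.Theory.
Local Open Scope classical_set_scope.
Local Open Scope ring_scope.
Set Implicit Arguments. Unset Strict Implicit. Unset Printing Implicit Defensive.

Section Euclidean.
Variables (R : realType) (n : nat).
Implicit Types (x y z : n.-tuple R).

Lemma cauchy_schwarz_sum (u v : 'I_n -> R) :
  (\sum_i u i * v i) ^+ 2 <= (\sum_i u i ^+ 2) * (\sum_i v i ^+ 2).
Proof.
have prod_sum (f g : 'I_n -> R) :
    (\sum_i f i) * (\sum_j g j) = \sum_i \sum_j f i * g j.
  by rewrite mulr_suml; apply: eq_bigr => i _; rewrite mulr_sumr.
have lagrange : \sum_i \sum_j (u i * v j - u j * v i) ^+ 2 =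
    2 * ((\sum_i u i ^+ 2) * (\sum_i v i ^+ 2) - (\sum_i u i * v i) ^+ 2).
  rewrite expr2 !prod_sum.
  have -> : \sum_i \sum_j (u i * v j - u j * v i) ^+ 2 =
      \sum_i \sum_j (u i ^+ 2 * v j ^+ 2) + \sum_i \sum_j (u j ^+ 2 * v i ^+ 2)
      - 2 * \sum_i \sum_j (u i * v i * (u j * v j)).
    rewrite mulr_sumr -big_split -sumrB /=; apply: eq_bigr => i _.
    by rewrite mulr_sumr -big_split -sumrB /=; apply: eq_bigr => j _; ring.
  by rewrite [X in _ + X - _]exchange_big /=; ring.
have : 0 <= \sum_i \sum_j (u i * v j - u j * v i) ^+ 2.
  by apply: sumr_ge0 => i _; apply: sumr_ge0 => j _; exact: sqr_ge0.
by rewrite lagrange; lra.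
Qed.

Lemma sqnorm_ge0 x : 0 <= sqnorm x.
Proof. by apply: sumr_ge0 => i _; exact: sqr_ge0. Qed.

Lemma enorm_ge0 x : 0 <= enorm x.
Proof. exact: sqrtr_ge0. Qed.

Lemma enorm_sqr x : enorm x ^+ 2 = sqnorm x.
Proof. by rewrite sqr_sqrtr // sqnorm_ge0. Qed.

Lemma sqnorm_vsubxx x : sqnorm (vsub x x) = 0.
Proof. by rewrite /sqnorm big1 // => i _; rewrite tnth_mktuple subrr expr0n. Qed.

Lemma sqnorm_vsubC x y : sqnorm (vsub x y) = sqnorm (vsub y x).
Proof. by apply: eq_bigr => i _; rewrite !tnth_mktuple -sqrrN opprB. Qed.

Lemma sqnorm_vsub_le x y z :
  sqnorm (vsub x y) <= 2 * sqnorm (vsub x z) + 2 * sqnorm (vsub y z).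
Proof.
rewrite /sqnorm !mulr_sumr -big_split /=; apply: ler_sum => i _.
rewrite !tnth_mktuple; set s := tnth x i - tnth z i; set t := tnth y i - tnth z i.
have -> : tnth x i - tnth y i = s - t by rewrite /s /t; ring.
by have := sqr_ge0 (s + t); rewrite sqrrB sqrrD; lra.
Qed.

Lemma enorm_vsub_le x y M :
  enorm x <= M -> enorm y <= M -> enorm (vsub x y) <= 2 * M.
Proof.
move=> hx hy; pose o := [tuple (0 : R) | _ < n].
have vsub0 w : vsub w o = w by apply: eq_from_tnth => i; rewrite !tnth_mktuple subr0.
have := sqnorm_vsub_le x y o; rewrite !vsub0 -!enorm_sqr.
by have := enorm_ge0 x; have := enorm_ge0 y; have := enorm_ge0 (vsub x y); nra.
Qed.

Lemma vadd_vsub x y : vadd y (vsub x y) = x.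
Proof. by apply: eq_from_tnth => i; rewrite !tnth_mktuple addrC subrK. Qed.

Lemma sqnorm_vsub_segment c k (t : R) :
  sqnorm (vsub (vadd [tuple (1 - t) * tnth c j | j < n] [tuple t * tnth k j | j < n]) c)
  = t ^+ 2 * sqnorm (vsub k c).
Proof. by rewrite /sqnorm mulr_sumr; apply: eq_bigr => j _; rewrite !tnth_mktuple; ring. Qed.

End Euclidean.

Section StarShapedDiameter.
Variables (R : realType) (n : nat) (K : set (n.-tuple R)).

Definition star_shaped_at (c : n.-tuple R) : Prop :=
  K c /\ forall k t, K k -> 0 <= t <= 1 ->
    K (vadd [tuple (1 - t) * tnth c j | j < n] [tuple t * tnth k j | j < n]).

Lemma star_shaped_at_sqnorm c k r : star_shaped_at c -> K k -> 0 <= r ->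
  exists2 mu, K mu & sqnorm (vsub mu c) = Num.min (sqnorm (vsub k c)) r.
Proof.
move=> [_ Kseg] Kk r0; set D := sqnorm (vsub k c).
have D0 : 0 <= D := sqnorm_ge0 _.
have [D_le_r|r_lt_D] := leP D r.
  by exists k => //; rewrite min_l.
have Dpos : 0 < D by lra.
set t := Num.sqrt (r / D).
have t0 : 0 <= t := sqrtr_ge0 _.
have t2 : t ^+ 2 = r / D by rewrite sqr_sqrtr // divr_ge0.
have t1 : t <= 1.
  by rewrite -(sqrtr1 R) ler_sqrt // ler_pdivrMr // mul1r ltW.
exists (vadd [tuple (1 - t) * tnth c j | j < n] [tuple t * tnth k j | j < n]).
  by apply: Kseg; rewrite ?t0.
by rewrite sqnorm_vsub_segment t2 -/D divfK ?gt_eqF // min_r // ltW.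
Qed.

Lemma exists_far_point c : bounded_tset K -> K c ->
  exists2 k, K k & tdiam K ^+ 2 / 16 <= sqnorm (vsub k c).
Proof.
move=> [M KM] Kc.
set S := [set r | exists x y, K x /\ K y /\ r = enorm (vsub x y)].
have S0 : S 0.
  by exists c, c; do 2 split => //; rewrite /enorm sqnorm_vsubxx sqrtr0.
have supS : has_sup S.
  split; first by exists 0.
  exists (2 * M) => _ [x [y [Kx [Ky ->]]]].
  exact: enorm_vsub_le (KM _ Kx) (KM _ Ky).
have d0 : 0 <= tdiam K := sup_upper_bound supS S0.
have [d_le0|dpos] := leP (tdiam K) 0.
  have -> : tdiam K = 0 by apply/eqP; rewrite eq_le d_le0 d0.
  by exists c => //; rewrite expr0n mul0r sqnorm_ge0.
have [_ [x [y [Kx [Ky ->]]]] far] := sup_adherent (divr_gt0 dpos (ltr0n R 2)) supS.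
have : tdiam K ^+ 2 / 4 <= sqnorm (vsub x y).
  have half : tdiam K / 2 <= enorm (vsub x y) by move: far; rewrite /tdiam -/S; lra.
  by rewrite -enorm_sqr; nra.
have := sqnorm_vsub_le x y c.
have [x_far|x_near] := leP (tdiam K ^+ 2 / 16) (sqnorm (vsub x c)).
  by exists x.
by exists y => //; lra.
Qed.

End StarShapedDiameter.

Definition coins (N : nat) : Type := {ffun 'I_N -> bool}.
HB.instance Definition _ N := Finite.on (coins N).
HB.instance Definition _ N := isPointed.Build (coins N) [ffun => false].
HB.instance Definition _ N := @isMeasurable.Build default_measure_display (coins N)
  discrete_measurable discrete_measurable0 discrete_measurableC discrete_measurableU.

Lemma measurable_fun_coins N d (T : measurableType d) (f : coins N -> T) :
  measurable_fun setT f.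
Proof. by []. Qed.

Lemma indic_bigcap (R : realType) (T : Type) (N : nat) (X : 'I_N -> set T) (w : T) :
  (w \in \bigcap_(i in [set: 'I_N]) X i)%:R = \prod_i (w \in X i)%:R :> R.
Proof.
have [Xw|/existsNP [i Xiw]] := pselect (forall i, X i w).
  by rewrite mem_set ?big1 // => i _; rewrite mem_set.
rewrite memNset; last by move/(_ i I).
by rewrite (bigD1 i) //= memNset // mul0r.
Qed.

Section CoinProduct.
Variables (R : realType) (N : nat) (q : R).
Hypothesis q01 : 0 <= q <= 1.

Definition coins_weight (w : coins N) : R := \prod_i bernoulli_pmf q (w i).

Lemma coins_weight_ge0 w : 0 <= coins_weight w.
Proof. by apply: prodr_ge0 => i _; exact: bernoulli_pmf_ge0. Qed.

Lemma sum_bernoulli_pmf : \sum_t bernoulli_pmf q t = 1.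
Proof. by rewrite big_bool /= addrC subrK. Qed.

Lemma sum_coins_weight_prod (h : 'I_N -> bool -> R) :
  \sum_w coins_weight w * \prod_i h i (w i) = \prod_i \sum_t bernoulli_pmf q t * h i t.
Proof.
by rewrite bigA_distr_bigA /=; apply: eq_bigr => w _; rewrite -big_split.
Qed.

Lemma sum_coins_weight_coord (i : 'I_N) (g : bool -> R) :
  \sum_w coins_weight w * g (w i) = \sum_t bernoulli_pmf q t * g t.
Proof.
pose h j t := if j == i then g t else 1.
have hi w : g (w i) = \prod_j h j (w j).
  by rewrite (bigD1 i) //= /h eqxx big1 ?mulr1 // => j /negbTE ->.
under eq_bigr do rewrite hi.
have other j : j != i -> \sum_t bernoulli_pmf q t * h j t = 1.
  move=> /negbTE ji; rewrite /h ji.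
  by under eq_bigr do rewrite mulr1; exact: sum_bernoulli_pmf.
rewrite sum_coins_weight_prod (bigD1 i) //= [X in _ * X]big1 ?mulr1; last exact: other.
by rewrite /h eqxx.
Qed.

Lemma sum_coins_weight : \sum_w coins_weight w = 1.
Proof.
transitivity (\prod_(i < N) \sum_t bernoulli_pmf q t * 1).
  rewrite -(sum_coins_weight_prod (fun _ _ => 1)).
  by apply: eq_bigr => w _; rewrite big1_eq mulr1.
by rewrite big1 // => i _; under eq_bigr do rewrite mulr1; exact: sum_bernoulli_pmf.
Qed.

Definition coins_prob (A : set (coins N)) : \bar R :=
  (\sum_w mscale (NngNum (coins_weight_ge0 w)) \d_w A)%E.

Let coins_prob0 : coins_prob set0 = 0%E.
Proof. by rewrite /coins_prob big1 // => w _; rewrite measure0. Qed.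

Let coins_prob_ge0 A : (0 <= coins_prob A)%E.
Proof. by apply: sume_ge0 => w _; exact: measure_ge0. Qed.

Let coins_prob_sigma_additive : semi_sigma_additive coins_prob.
Proof.
move=> F mF tF mUF; rewrite [X in _ --> X](_ : _ =
    lim ((fun k => \sum_(0 <= i < k) coins_prob (F i))%E @ \oo)).
  by apply: is_cvg_ereal_nneg_natsum => k _; exact: coins_prob_ge0.
rewrite /coins_prob nneseries_sum; last by move=> w j _; exact: measure_ge0.
by apply: eq_bigr => w _; exact: measure_semi_bigcup.
Qed.

HB.instance Definition _ := isMeasure.Build _ _ _ coins_prob
  coins_prob0 coins_prob_ge0 coins_prob_sigma_additive.

Lemma coins_probE A : coins_prob A = (\sum_w coins_weight w * (w \in A)%:R)%:E.
Proof. by rewrite /coins_prob -sumEFin; apply: eq_bigr => w _; rewrite /mscale /= diracE. Qed.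

Lemma coins_probT : coins_prob setT = 1%E.
Proof.
rewrite coins_probE -[X in _ = X%:E]sum_coins_weight.
by congr _%:E; apply: eq_bigr => w _; rewrite in_setT mulr1.
Qed.

HB.instance Definition _ := Measure_isProbability.Build _ _ _ coins_prob coins_probT.

Lemma coins_prob_coord (T : Type) (f : bool -> T) (i : 'I_N) (B : set T) :
  coins_prob ((fun w : coins N => f (w i)) @^-1` B) =
  ((1 - q) * (f false \in B)%:R + q * (f true \in B)%:R)%:E.
Proof.
rewrite coins_probE (sum_coins_weight_coord i (fun t => (f t \in B)%:R)).
by rewrite big_bool addrC.
Qed.

Lemma coins_prob_indep (T : Type) (f : bool -> T) (B : 'I_N -> set T) :
  coins_prob (\bigcap_(i in [set: 'I_N]) ((fun w : coins N => f (w i)) @^-1` B i)) =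
  (\big[*%E/1%E]_(i < N) coins_prob ((fun w : coins N => f (w i)) @^-1` B i))%E.
Proof.
rewrite coins_probE; under eq_bigr do rewrite indic_bigcap.
rewrite (sum_coins_weight_prod (fun i t => (f t \in B i)%:R)).
under [RHS]eq_bigr => i _ do
  rewrite coins_probE (sum_coins_weight_coord i (fun t => (f t \in B i)%:R)).
by rewrite prodEFin.
Qed.

Definition heads (w : coins N) : R := \sum_i (w i)%:R.

Lemma heads_le w : heads w <= N%:R.
Proof.
rewrite -[N in N%:R]card_ord -sumr_const.
by apply: ler_sum => i _; rewrite lern1 leq_b1.
Qed.

Lemma sum_coins_weight_heads : \sum_w coins_weight w * heads w = q *+ N.
Proof.
under eq_bigr do rewrite mulr_sumr; rewrite exchange_big /=.
rewrite (eq_bigr (fun _ => q)) ?sumr_const ?card_ord // => i _.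
by rewrite (sum_coins_weight_coord i (fun t => t%:R)) big_bool /= mulr1 mulr0 addr0.
Qed.

Lemma coins_prob_heads_le (c : R) : 0 < q -> 2 * q <= c ->
  (2^-1%:E <= coins_prob [set w | (heads w <= c * N%:R)%R])%E.
Proof.
move=> q0 qc; have [/eqP N0|Npos] := boolP (N == 0%N).
  rewrite (_ : [set _ | _] = setT) ?probability_setT ?lee_fin ?invf_le1 ?ler1n //.
  by apply/seteqP; split => // w _ /=; apply: le_trans (heads_le w) _; rewrite N0 !mulr0.
set cN := c * N%:R.
have cN0 : 0 < cN by rewrite mulr_gt0 ?ltr0n ?lt0n // (lt_le_trans _ qc) ?mulr_gt0.
set G := [set w | _]; rewrite coins_probE lee_fin.
(* Markov's inequality: cN is at most heads w outside G. *)
have markov : cN * \sum_w coins_weight w * (w \notin G)%:R <= q *+ N.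
  rewrite -sum_coins_weight_heads mulr_sumr; apply: ler_sum => w _.
  rewrite mulrCA; apply: ler_wpM2l; first exact: coins_weight_ge0.
  have [Gw|nGw] := pselect (G w).
    by rewrite mem_set // mulr0; apply: sumr_ge0 => i _; exact: ler0n.
  by rewrite memNset // mulr1; move/negP: nGw; rewrite -ltNge => /ltW.
have qN : q *+ N <= cN / 2.
  rewrite /cN -[q *+ N]mulr_natr mulrAC; apply: ler_wpM2r; first exact: ler0n.
  by rewrite ler_pdivlMr // mulrC.
have : \sum_w coins_weight w * (w \notin G)%:R <= 2^-1.
  by rewrite -(ler_pM2l cN0) (le_trans markov).
have : \sum_w coins_weight w * (w \in G)%:R +
       \sum_w coins_weight w * (w \notin G)%:R = 1.
  rewrite -big_split -[RHS]sum_coins_weight; apply: eq_bigr => w _.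
  by case: (w \in G); rewrite /= ?mulr1 ?mulr0 ?addr0 ?add0r.
lra.
Qed.

End CoinProduct.

Arguments heads {R N}.

Section TwoPointLaw.
Variables (d : measure_display) (T : measurableType d) (R : realType).

Let measurable_abse (f : T -> R) : measurable_fun setT f ->
  measurable_fun setT (fun x => `|(f x)%:E|%E).
Proof. by move=> mf; apply: measurableT_comp => //; exact/measurable_EFinP. Qed.

Lemma integral_mscale_dirac (r : {nonneg R}) (c : T) (f : T -> R) :
  measurable_fun setT f ->
  (\int[mscale r \d_c]_x (f x)%:E = (r%:num * f c)%:E)%E.
Proof.
move=> mf; have mfE : measurable_fun setT (fun x => (f x)%:E) by exact/measurable_EFinP.
rewrite integralE !ge0_integral_mscale //; try exact: measurable_funeneg;
  try exact: measurable_funepos; try by move=> x _; rewrite ?funeneg_ge0 ?funepos_ge0.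
rewrite !integral_dirac ?diracT ?mul1e //; try exact: measurable_funeneg;
  try exact: measurable_funepos.
rewrite funeposE funenegE -EFin_max -EFinN -EFin_max -!EFinM -EFinB -mulrBr.
by congr (_ * _)%:E; have [|] := leP 0 (f c); have [|] := leP (- f c) 0; lra.
Qed.

Lemma integrable_mscale_dirac (r : {nonneg R}) (c : T) (f : T -> R) :
  measurable_fun setT f -> (mscale r \d_c).-integrable setT (fun x => (f x)%:E).
Proof.
move=> mf; apply/integrableP; split; first exact/measurable_EFinP.
rewrite ge0_integral_mscale // ?integral_dirac ?diracT ?mul1e //; try exact: measurable_abse.
by rewrite -EFinM ltry.
Qed.

Variable q : R.
Hypothesis q01 : 0 <= q <= 1.
Variables a b : T.

Let onem_ge0 : 0 <= 1 - q. Proof. by case/andP: q01 => _; rewrite subr_ge0. Qed.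
Let q_ge0 : 0 <= q. Proof. by case/andP: q01. Qed.

Definition two_point : set T -> \bar R :=
  measure_add (mscale (NngNum onem_ge0) \d_a) (mscale (NngNum q_ge0) \d_b).

HB.instance Definition _ := Measure.on two_point.

Lemma two_pointE A : two_point A = ((1 - q) * (a \in A)%:R + q * (b \in A)%:R)%:E.
Proof. by rewrite /two_point measure_addE /= /mscale /= !diracE. Qed.

Let two_pointT : two_point setT = 1%E.
Proof. by rewrite two_pointE !in_setT !mulr1 subrK. Qed.

HB.instance Definition _ := Measure_isProbability.Build _ _ _ two_point two_pointT.

Lemma integral_two_point (f : T -> R) : measurable_fun setT f ->
  (\int[two_point]_x (f x)%:E = ((1 - q) * f a + q * f b)%:E)%E.
Proof.
move=> mf; rewrite integral_measure_add //; try exact: integrable_mscale_dirac.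
by rewrite !integral_mscale_dirac.
Qed.

Lemma integrable_two_point (f : T -> R) : measurable_fun setT f ->
  two_point.-integrable setT (fun x => (f x)%:E).
Proof.
move=> mf; apply/integrableP; split; first exact/measurable_EFinP.
rewrite ge0_integral_measure_add // ?ge0_integral_mscale // ?integral_dirac //;
  try exact: measurable_abse.
by rewrite /= !diracT !mul1e -!EFinM -EFinD ltry.
Qed.

End TwoPointLaw.

Definition collapse (R : realType) (n N : nat) (mu0 : n.-tuple R) (eps : R)
    (x : N.-tuple (n.-tuple R)) : N.-tuple (n.-tuple R) :=
  if (#|[set i | tnth x i != mu0]|)%:R <= eps * N%:R then [tuple mu0 | _ < N] else x.

Lemma adversary_collapse (R : realType) (n N : nat) (mu0 : n.-tuple R) (eps : R) :
  0 <= eps -> adversary eps (@collapse R n N mu0 eps).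
Proof.
move=> eps0 x; rewrite /collapse; case: ifP => [few|_]; last first.
  rewrite (_ : #|_| = 0%N) ?mulr_ge0 //.
  by apply: eq_card0 => i; apply/negP => /set_mem /=; rewrite eqxx.
apply: le_trans few; rewrite ler_nat subset_leq_card //.
by apply/fintype.subsetP => i /set_mem /=; rewrite tnth_mktuple eq_sym => /mem_set.
Qed.

Section CorruptedTwoPoint.
Variables (R : realType) (n N : nat) (s2 eps : R) (mu0 mu : n.-tuple R).
Hypotheses (eps_gt0 : 0 < eps) (eps_le2 : eps <= 2).
Hypothesis mu_near : sqnorm (vsub mu mu0) <= eps / 2 * s2.

Local Notation q := (eps / 2).
Let q_gt0 : 0 < q. Proof. by rewrite divr_gt0. Qed.
Let q01 : 0 <= q <= 1. Proof. by rewrite ltW //= ler_pdivrMr // mul1r. Qed.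

(* mu + a = mu0, and b is chosen so that (1 - q) a + q b = 0. *)
Let a := vsub mu0 mu.
Let b := [tuple (1 - q^-1) * tnth a j | j < n].
Let atom (t : bool) := if t then b else a.
Let noise_law := two_point q01 a b.
Let sample (w : coins N) := [tuple vadd mu (atom (w i)) | i < N].

Lemma mean_vec_noise : mean_vec noise_law = 0.
Proof.
apply/rowP => j; rewrite !mxE integral_two_point; last exact: measurable_tnth.
by rewrite /= /b !tnth_mktuple; field; rewrite gt_eqF.
Qed.

Lemma cov_mx_noise j k : cov_mx noise_law j k = (1 - q) / q * (tnth a j * tnth a k).
Proof.
rewrite /cov_mx mxE mean_vec_noise integral_two_point /=; last first.
  by apply: measurable_funM; apply: measurable_funB => //; exact: measurable_tnth.
by rewrite !mxE !subr0 /b !tnth_mktuple; field; rewrite gt_eqF.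
Qed.

Lemma noise_law_Xi : Xi_class s2 noise_law.
Proof.
split; first by move=> j; apply: integrable_two_point; exact: measurable_tnth.
split.
  by move=> j; apply: integrable_two_point; apply: measurable_funX; exact: measurable_tnth.
split; first exact: mean_vec_noise.
move=> u; rewrite mul_mx_scalar !mxE.
under eq_bigr do rewrite !mxE.
under [X in _ <= X]eq_bigr do rewrite !mxE.
set S := \sum_j u 0 j * tnth a j; set U := \sum_j u 0 j ^+ 2.
have -> : \sum_k (\sum_j u 0 j * cov_mx noise_law j k) * u 0 k = (1 - q) / q * S ^+ 2.
  rewrite expr2 mulrA [RHS]mulr_sumr; apply: eq_bigr => k _.
  rewrite /S mulr_sumr !mulr_suml; apply: eq_bigr => j _.
  by rewrite cov_mx_noise; ring.
have -> : \sum_k s2 * u 0 k * u 0 k = s2 * U.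
  by rewrite mulr_sumr; apply: eq_bigr => k _; ring.
have a_small : sqnorm a <= q * s2 by rewrite /a sqnorm_vsubC.
have CS : S ^+ 2 <= U * sqnorm a := cauchy_schwarz_sum _ _.
have U0 : 0 <= U by apply: sumr_ge0 => j _; exact: sqr_ge0.
have s2_ge0 : 0 <= s2 by have := le_trans (sqnorm_ge0 a) a_small; rewrite pmulr_rge0.
have c0 : 0 <= (1 - q) / q by case/andP: q01 => _ q1; rewrite divr_ge0 ?subr_ge0 // ltW.
apply: le_trans (ler_wpM2l c0 CS) _.
apply: le_trans (ler_wpM2l c0 (ler_wpM2l U0 a_small)) _.
rewrite (_ : (1 - q) / q * (U * (q * s2)) = (1 - q) * (s2 * U)); last by field; rewrite gt_eqF.
by rewrite ler_piMl ?mulr_ge0 // gerBl ltW.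
Qed.

Lemma collapse_sample w : heads w <= eps * N%:R ->
  collapse mu0 eps (sample w) = [tuple mu0 | _ < N].
Proof.
move=> few; rewrite /collapse ifT //; apply: le_trans few.
rewrite -sum1_card natr_sum big_mkcond /=; apply: ler_sum => i _.
case: ifPn => [/set_mem /=|_]; last by case: (w i).
by rewrite tnth_mktuple /atom; case: (w i) => //=; rewrite /a vadd_vsub eqxx.
Qed.

Lemma sample_risk_attainable (K : set (n.-tuple R))
    (muhat : N.-tuple (n.-tuple R) -> n.-tuple R) : K mu ->
  attainable_risks K s2 eps muhat
    (\int[coins_prob q01]_w (sqnorm (vsub (muhat (collapse mu0 eps (sample w))) mu))%:E)%E.
Proof.
move=> Kmu; exists mu; split => //.
exists default_measure_display, (coins N), (coins_prob q01), (fun i (w : coins N) => atom (w i)),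
  noise_law.
split; first exact: noise_law_Xi.
split; first by move=> i; exact: measurable_fun_coins.
split; first by move=> i B _; rewrite /= coins_prob_coord two_pointE.
split; first by move=> B _; exact: coins_prob_indep.
by exists (collapse mu0 eps); split => //; apply: adversary_collapse; exact: ltW.
Qed.

Lemma sample_risk_ge (muhat : N.-tuple (n.-tuple R) -> n.-tuple R) :
  ((2^-1 * sqnorm (vsub (muhat [tuple mu0 | _ < N]) mu))%:E <=
   \int[coins_prob q01]_w (sqnorm (vsub (muhat (collapse mu0 eps (sample w))) mu))%:E)%E.
Proof.
set c := sqnorm _; have c0 : 0 <= c := sqnorm_ge0 _.
set G := [set w : coins N | heads w <= eps * N%:R].
apply: (@le_trans _ _ (\int[coins_prob q01]_w (c%:E * (\1_G w)%:E))%E).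
  rewrite ge0_integralZl ?lee_fin //; try exact: measurable_fun_coins.
  rewrite integral_indic // setIT EFinM muleC lee_wpmul2l ?lee_fin //.
  by apply: coins_prob_heads_le => //; rewrite mulrC divfK.
apply: ge0_le_integral => //; try exact: measurable_fun_coins.
  by move=> w _; rewrite mule_ge0 ?lee_fin.
move=> w _; rewrite indicE; have [Gw|nGw] := pselect (G w).
  by rewrite mem_set // mule1 collapse_sample.
by rewrite memNset // mule0 lee_fin sqnorm_ge0.
Qed.

Lemma worst_risk_ge_const_sample (K : set (n.-tuple R))
    (muhat : N.-tuple (n.-tuple R) -> n.-tuple R) : K mu ->
  ((2^-1 * sqnorm (vsub (muhat [tuple mu0 | _ < N]) mu))%:E
     <= worst_risk K s2 eps muhat)%E.
Proof.
move=> Kmu; apply: le_trans (sample_risk_ge muhat) _.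
exact/ereal_sup_ubound/sample_risk_attainable.
Qed.

End CorruptedTwoPoint.

Lemma worst_risk_ge_two_point (R : realType) (n N : nat) (K : set (n.-tuple R))
    (s2 eps : R) (mu0 mu1 : n.-tuple R) (muhat : N.-tuple (n.-tuple R) -> n.-tuple R) :
  0 < eps -> eps <= 2 -> K mu0 -> K mu1 -> sqnorm (vsub mu1 mu0) <= eps / 2 * s2 ->
  ((8^-1 * sqnorm (vsub mu1 mu0))%:E <= worst_risk K s2 eps muhat)%E.
Proof.
move=> eps0 eps2 Kmu0 Kmu1 near.
have near0 : sqnorm (vsub mu0 mu0) <= eps / 2 * s2.
  by rewrite sqnorm_vsubxx (le_trans (sqnorm_ge0 _) near).
have risk0 := worst_risk_ge_const_sample eps0 eps2 near0 muhat Kmu0.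
have risk1 := worst_risk_ge_const_sample eps0 eps2 near muhat Kmu1.
set c := muhat _ in risk0 risk1.
(* A single guess c cannot be close to both mu0 and mu1. *)
have := sqnorm_vsub_le mu1 mu0 c; rewrite !(sqnorm_vsubC _ c).
have [le01|le10] := leP (sqnorm (vsub c mu0)) (sqnorm (vsub c mu1)) => sep.
  by apply: le_trans risk1; rewrite lee_fin; lra.
by apply: le_trans risk0; rewrite lee_fin; lra.
Qed.

Theorem mainTheorem4 :
  exists a : rat, 0 < a /\
  forall (R : realType) (n N : nat) (K : set (n.-tuple R)) (sigma eps : R),
    bounded_tset K -> star_shaped_tset K -> 0 < sigma -> 0 < eps < 2^-1 ->
    ((ratr a * Order.min (eps * sigma ^+ 2) (tdiam K ^+ 2))%:E
       <= minimax_risk N K (sigma ^+ 2) eps)%E.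
Proof.
exists (128%:Q)^-1; split; first by rewrite invr_gt0.
move=> R n N K sigma eps Kb [c Kc] _ /andP[eps0 eps_half].
have eps2 : eps <= 2 by lra.
have r0 : 0 <= eps / 2 * sigma ^+ 2 by rewrite mulr_ge0 ?sqr_ge0 ?divr_ge0 ?ltW.
have [k Kk k_far] := exists_far_point Kb (proj1 Kc).
have [mu1 Kmu1 mu1E] := star_shaped_at_sqnorm Kc Kk r0.
have near : sqnorm (vsub mu1 c) <= eps / 2 * sigma ^+ 2 by rewrite mu1E ge_min lexx orbT.
apply: le_ereal_inf_tmp => _ [muhat _ <-].
apply: le_trans (worst_risk_ge_two_point muhat eps0 eps2 (proj1 Kc) Kmu1 near).
rewrite lee_fin mu1E (_ : ratr _ = 128^-1); last by rewrite fmorphV rmorph_nat.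
set m := Order.min (eps * sigma ^+ 2) (tdiam K ^+ 2).
have m_le1 : m <= eps * sigma ^+ 2 by rewrite ge_min lexx.
have m_le2 : m <= tdiam K ^+ 2 by rewrite ge_min lexx orbT.
rewrite (_ : 128^-1 * m = 8^-1 * (m / 16)); last by field.
by rewrite ler_wpM2l // le_min; apply/andP; split; lra.
Qed.
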